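(* Let $n$ be a number and $p\ge 0$ an integer such that the ball $\langle n;-\frac{1}{2^p}\rangle$ is balanced. Then for every integer $m\ge 0$, every integer $q\ge 0$, and every $a$ that is either an odd integer with $0<a<2^q$ or $a=0$, such that $m+a2^{-q}>0$, and for any game $H$ whose value is $m+\frac{a}{2^q}$, \[\Big\langle n;-\frac{1}{2^p}\Big\rangle\mathbin{:}H=n+\frac{1}{2^p}-\frac{1}{2^{p+m}}+\frac{a}{2^{p+m+q+1}}.\]
   Context: Games are short normal-play combinatorial games, written $\{L\mid R\}$, with the usual disjunctive sum and equality of values. A number is a game with $G^L<G<G^R$ for all options, with values identified with dyadic rationals. The ordinal sum is $G\mathbin{:}H\cong\{L(G),\,G\mathbin{:}L(H)\mid R(G),\,G\mathbin{:}R(H)\}$. For numbers $m,\Delta$, the ball $\langle m;\Delta\rangle$ is the game $\{x\mid y\}$ where $x,y$ are the canonical forms of $m+\Delta$ and $m-\Delta$; it is balanced if $\langle m;\Delta\rangle+\langle m;\Delta\rangle=m+m$. *)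

From mathcomp Require Import all_boot all_order all_algebra.
Set Implicit Arguments. Unset Strict Implicit. Unset Printing Implicit Defensive.
Import Order.TTheory GRing.Theory Num.Theory.

Inductive game : Type := Game of seq game & seq game.

Definition leftopts (G : game) := let: Game L _ := G in L.
Definition rightopts (G : game) := let: Game _ R := G in R.

(** cmp G H = (G <= H, H <= G), with the usual normal-play recursive order:
    G <= H  iff  no G^L with H <= G^L and no H^R with H^R <= G. *)
Fixpoint cmp (G : game) : game -> bool * bool :=
  match G with Game GL GR =>
    fix cmpG (H : game) : bool * bool :=
      match H with Game HL HR =>
        ( all (fun gl => ~~ (cmp gl H).2) GL && all (fun hr => ~~ (cmpG hr).2) HR,
          all (fun hl => ~~ (cmpG hl).1) HL && all (fun gr => ~~ (cmp gr H).1) GR )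
      end
  end.

Definition game_le (G H : game) : bool := (cmp G H).1.
Definition game_eq (G H : game) : bool := game_le G H && game_le H G.

Fixpoint add (G : game) : game -> game :=
  match G with Game GL GR =>
    fix addG (H : game) : game :=
      match H with Game HL HR =>
        Game ([seq add gl H | gl <- GL] ++ [seq addG hl | hl <- HL])
             ([seq add gr H | gr <- GR] ++ [seq addG hr | hr <- HR])
      end
  end.

Fixpoint neg (G : game) : game :=
  match G with Game GL GR => Game [seq neg g | g <- GR] [seq neg g | g <- GL] end.

Fixpoint ordsum (G H : game) {struct H} : game :=
  match H with Game HL HR =>
    Game (leftopts G ++ [seq ordsum G h | h <- HL])
         (rightopts G ++ [seq ordsum G h | h <- HR])
  end.

Fixpoint canon_nat (k : nat) : game :=
  match k with 0 => Game [::] [::] | k'.+1 => Game [:: canon_nat k'] [::] end.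

Definition canon_int (z : int) : game :=
  match z with Posz k => canon_nat k | Negz k => neg (canon_nat k.+1) end.

(** canonical form of j / 2^e *)
Fixpoint canon_dy (j : int) (e : nat) : game :=
  match e with
  | 0 => canon_int j
  | e'.+1 =>
      if odd `|j|%N then
        Game [:: canon_dy ((j - 1) %/ 2)%Z e'] [:: canon_dy ((j + 1) %/ 2)%Z e']
      else canon_dy (j %/ 2)%Z e'
  end.

Local Open Scope ring_scope.

Definition dyadic (x : rat) : Prop := exists (j : int) (e : nat), x = j%:~R / 2%:R ^+ e.

(** Canonical form of a rational (meaningful for dyadic x: denq x = 2^e). *)
Definition canon (x : rat) : game := canon_dy (numq x) (trunc_log 2 `|denq x|%N).

Definition ball (m D : rat) : game := Game [:: canon (m + D)] [:: canon (m - D)].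

Definition balanced (m D : rat) : bool :=
  game_eq (add (ball m D) (ball m D)) (add (canon m) (canon m)).

(* A balanced ball B = <n; -2^-p> = {n - 2^-p | n + 2^-p} is comparable with every
   number strictly between its stops, so cancelling in B + B = n + n forces B = n;
   comparing the canonical left option of n with the stop n - 2^-p then shows that
   2^p n is an integer.  Since B : H depends only on the value of H, one may take H
   canonical and induct on it.  The options of B : H are those of B together with
   B : H^L and B : H^R, whose values are known by induction, and a game equals a
   number z as soon as its left options lie below z, its right options above z, and
   the canonical options of z are dominated by options of the game.  For the claimed
   value z these canonical options are exactly the values of B : H^L and B : H^R, or
   the stop n + 2^-p when H is a positive integer. *)

From Pilot Require Import Defs.
From HB Require Import structures.
From mathcomp Require Import all_boot all_order all_algebra.
From mathcomp Require Import zify ring lra.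
Import Order.TTheory GRing.Theory Num.Theory.
Set Implicit Arguments. Unset Strict Implicit. Unset Printing Implicit Defensive.

(* Encoding games as generic trees makes [game] a countType, so that lists of options
   support [\in]. *)
Fixpoint game_tree (G : game) : GenTree.tree unit :=
  let: Game L R := G in GenTree.Node (size L) (map game_tree L ++ map game_tree R).

Fixpoint tree_game (t : GenTree.tree unit) : option game :=
  if t is GenTree.Node n ts then
    let gs := pmap tree_game ts in Some (Game (take n gs) (drop n gs))
  else None.

Lemma game_treeK : pcancel game_tree tree_game.
Proof.
rewrite /pcancel; fix IH 1 => -[L R] /=.
rewrite pmap_cat.
have -> : pmap tree_game (map game_tree L) = L by elim: L => //= g s ->; rewrite IH.
have -> : pmap tree_game (map game_tree R) = R by elim: R => //= g s ->; rewrite IH.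
by rewrite take_size_cat // drop_size_cat.
Qed.

HB.instance Definition _ := Countable.copy game (pcan_type game_treeK).

Fixpoint gsize (G : game) : nat :=
  let: Game L R := G in (sumn (map gsize L) + sumn (map gsize R)).+1.

Lemma leq_sumn_map (T : eqType) (f : T -> nat) s x : x \in s -> f x <= sumn (map f s).
Proof. by elim: s => //= y s IH; rewrite inE => /predU1P [->|/IH le_x]; lia. Qed.

Lemma gsize_left G g : g \in leftopts G -> gsize g < gsize G.
Proof. by case: G => L R /= /(leq_sumn_map gsize) /leq_ltn_trans; apply; rewrite ltnS leq_addr. Qed.

Lemma gsize_right G g : g \in rightopts G -> gsize g < gsize G.
Proof. by case: G => L R /= /(leq_sumn_map gsize) /leq_ltn_trans; apply; rewrite ltnS leq_addl. Qed.

Lemma gsize_ind (P : game -> Prop) :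
  (forall G, (forall G', gsize G' < gsize G -> P G') -> P G) -> forall G, P G.
Proof.
move=> IH G; move: {2}(gsize G).+1 (ltnSn (gsize G)) => N.
elim: N G => // N IHN G lt_G.
by apply: IH => G' lt_G'; apply: IHN; lia.
Qed.

Lemma gsize_ind2 (P : game -> game -> Prop) :
  (forall G H, (forall G' H', gsize G' + gsize H' < gsize G + gsize H -> P G' H') ->
    P G H) -> forall G H, P G H.
Proof.
move=> IH G H; move: {2}(gsize G + gsize H).+1 (ltnSn (gsize G + gsize H)) => N.
elim: N G H => // N IHN G H lt_GH.
by apply: IH => G' H' lt_GH'; apply: IHN; lia.
Qed.

Lemma gsize_ind3 (P : game -> game -> game -> Prop) :
  (forall G H K, (forall G' H' K', gsize G' + gsize H' + gsize K' < gsize G + gsize H + gsize K ->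
    P G' H' K') -> P G H K) -> forall G H K, P G H K.
Proof.
move=> IH G H K.
move: {2}(gsize G + gsize H + gsize K).+1 (ltnSn (gsize G + gsize H + gsize K)) => N.
elim: N G H K => // N IHN G H K lt_GHK.
by apply: IH => G' H' K' lt_GHK'; apply: IHN; lia.
Qed.

Lemma cmpE G H : cmp G H =
  (all (fun gl => ~~ (cmp gl H).2) (leftopts G) && all (fun hr => ~~ (cmp G hr).2) (rightopts H),
   all (fun hl => ~~ (cmp G hl).1) (leftopts H) && all (fun gr => ~~ (cmp gr H).1) (rightopts G)).
Proof. by case: G; case: H. Qed.

Lemma cmp_snd G H : (cmp G H).2 = game_le H G.
Proof.
move: G H; apply: gsize_ind2 => G H IH; rewrite /game_le (cmpE G H) (cmpE H G) /=.
congr andb; apply: eq_in_all => g g_opt; rewrite IH //.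
  by have := gsize_left g_opt; lia.
by have := gsize_right g_opt; lia.
Qed.

Lemma game_leE G H : game_le G H =
  all (fun gl => ~~ game_le H gl) (leftopts G) && all (fun hr => ~~ game_le hr G) (rightopts H).
Proof. by rewrite {1}/game_le cmpE /=; congr andb; apply: eq_all => g; rewrite cmp_snd. Qed.

Lemma game_le_refl_opts G : [/\ game_le G G,
  {in leftopts G, forall g, ~~ game_le G g} & {in rightopts G, forall g, ~~ game_le g G}].
Proof.
move: G; apply: gsize_ind => G IH.
have lf_left : {in leftopts G, forall g, ~~ game_le G g}.
  move=> g g_opt; rewrite game_leE negb_and; apply/orP; left; apply/allPn.
  by exists g; [|have [-> _ _] := IH g (gsize_left g_opt)].
have lf_right : {in rightopts G, forall g, ~~ game_le g G}.
  move=> g g_opt; rewrite game_leE negb_and; apply/orP; right; apply/allPn.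
  by exists g; [|have [-> _ _] := IH g (gsize_right g_opt)].
by split=> //; rewrite game_leE; apply/andP; split; apply/allP.
Qed.

Lemma game_le_refl G : game_le G G.
Proof. by case: (game_le_refl_opts G). Qed.

Lemma game_lf_left G g : g \in leftopts G -> ~~ game_le G g.
Proof. by case: (game_le_refl_opts G) => _ + _; apply. Qed.

Lemma game_lf_right G g : g \in rightopts G -> ~~ game_le g G.
Proof. by case: (game_le_refl_opts G) => _ _; apply. Qed.

Lemma game_le_trans G H K : game_le G H -> game_le H K -> game_le G K.
Proof.
move: G H K; apply: gsize_ind3 => G H K IH le_GH le_HK.
move: (le_GH) (le_HK); rewrite !game_leE => /andP [/allP GL_H _] /andP [_ /allP KR_H].
apply/andP; split; apply/allP => g g_opt; apply/negP => le_g.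
  have := GL_H g g_opt; rewrite (IH H K g) //; have := gsize_left g_opt; lia.
have := KR_H g g_opt; rewrite (IH g G H) //; have := gsize_right g_opt; lia.
Qed.

Lemma game_eq_le G H : game_eq G H -> game_le G H.
Proof. by case/andP. Qed.

Lemma game_eq_ge G H : game_eq G H -> game_le H G.
Proof. by case/andP. Qed.

Lemma game_eq_trans G H K : game_eq G H -> game_eq H K -> game_eq G K.
Proof.
move=> /andP [le_GH le_HG] /andP [le_HK le_KH].
by apply/andP; split; apply: game_le_trans; eassumption.
Qed.

Lemma game_le_eql G G' H : game_eq G G' -> game_le G H = game_le G' H.
Proof.
by move=> /andP [le_GG' le_G'G]; apply/idP/idP; apply: game_le_trans.
Qed.

Lemma game_le_eqr G H H' : game_eq H H' -> game_le G H = game_le G H'.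
Proof.
by move=> /andP [le_HH' le_H'H]; apply/idP/idP => ?; apply: game_le_trans; eassumption.
Qed.

Lemma leftopts_ordsum G X : leftopts (ordsum G X) = leftopts G ++ map (ordsum G) (leftopts X).
Proof. by case: X. Qed.

Lemma rightopts_ordsum G X : rightopts (ordsum G X) = rightopts G ++ map (ordsum G) (rightopts X).
Proof. by case: X. Qed.

Lemma le_ordsum2l G X Y : game_le (ordsum G X) (ordsum G Y) = game_le X Y.
Proof.
move: X Y; apply: gsize_ind2 => X Y IH.
rewrite game_leE [game_le X Y]game_leE leftopts_ordsum rightopts_ordsum !all_cat !all_map.
have -> : all (fun gl => ~~ game_le (ordsum G Y) gl) (leftopts G).
  by apply/allP => g g_opt; apply: game_lf_left; rewrite leftopts_ordsum mem_cat g_opt.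
have -> : all (fun gr => ~~ game_le gr (ordsum G X)) (rightopts G).
  by apply/allP => g g_opt; apply: game_lf_right; rewrite rightopts_ordsum mem_cat g_opt.
congr andb; apply: eq_in_all => g g_opt /=; rewrite IH //.
  by have := gsize_left g_opt; lia.
by have := gsize_right g_opt; lia.
Qed.

Lemma eq_ordsum2l G X Y : game_eq X Y -> game_eq (ordsum G X) (ordsum G Y).
Proof. by rewrite /game_eq !le_ordsum2l. Qed.

Lemma ordsum0 G : ordsum G (Game [::] [::]) = G.
Proof. by case: G => L R /=; rewrite !cats0. Qed.

Local Notation gadd := Defs.add.

Lemma leftopts_add G H :
  leftopts (gadd G H) = map (gadd^~ H) (leftopts G) ++ map (gadd G) (leftopts H).
Proof. by case: G; case: H. Qed.

Lemma rightopts_add G H :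
  rightopts (gadd G H) = map (gadd^~ H) (rightopts G) ++ map (gadd G) (rightopts H).
Proof. by case: G; case: H. Qed.

Lemma le_add2r H G G' : game_le (gadd G H) (gadd G' H) = game_le G G'.
Proof.
move: G G' H; apply: gsize_ind3 => G G' H IH.
apply/idP/idP => le_GG'.
- rewrite game_leE; apply/andP; split; apply/allP => g g_opt.
  + have gH_opt : gadd g H \in leftopts (gadd G H).
      by rewrite leftopts_add mem_cat (map_f (gadd^~ H)).
    apply: contra (game_lf_left gH_opt) => le_G'g; apply: game_le_trans le_GG' _.
    by rewrite IH //; have := gsize_left g_opt; lia.
  + have gH_opt : gadd g H \in rightopts (gadd G' H).
      by rewrite rightopts_add mem_cat (map_f (gadd^~ H)).
    apply: contra (game_lf_right gH_opt) => le_gG; apply: game_le_trans le_GG'.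
    by rewrite IH //; have := gsize_right g_opt; lia.
- move: (le_GG'); rewrite game_leE => /andP [/allP GL_G' /allP G'R_G].
  rewrite game_leE leftopts_add rightopts_add !all_cat !all_map.
  apply/andP; split; apply/andP; split; apply/allP => g g_opt /=.
  + by rewrite IH; [exact: GL_G'|have := gsize_left g_opt; lia].
  + have G'g_opt : gadd G' g \in leftopts (gadd G' H) by rewrite leftopts_add mem_cat map_f ?orbT.
    apply: contra (game_lf_left G'g_opt) => /game_le_trans; apply.
    by rewrite IH //; have := gsize_left g_opt; lia.
  + by rewrite IH; [exact: G'R_G|have := gsize_right g_opt; lia].
  + have Gg_opt : gadd G g \in rightopts (gadd G H) by rewrite rightopts_add mem_cat map_f ?orbT.
    apply: contra (game_lf_right Gg_opt) => le_G'gGH; apply: game_le_trans le_G'gGH.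
    by rewrite IH //; have := gsize_right g_opt; lia.
Qed.

Lemma le_add2l G H H' : game_le (gadd G H) (gadd G H') = game_le H H'.
Proof.
move: H H' G; apply: gsize_ind3 => H H' G IH.
apply/idP/idP => le_HH'.
- rewrite game_leE; apply/andP; split; apply/allP => h h_opt.
  + have Gh_opt : gadd G h \in leftopts (gadd G H) by rewrite leftopts_add mem_cat map_f ?orbT.
    apply: contra (game_lf_left Gh_opt) => le_H'h; apply: game_le_trans le_HH' _.
    by rewrite IH //; have := gsize_left h_opt; lia.
  + have Gh_opt : gadd G h \in rightopts (gadd G H') by rewrite rightopts_add mem_cat map_f ?orbT.
    apply: contra (game_lf_right Gh_opt) => le_hH; apply: game_le_trans le_HH'.
    by rewrite IH //; have := gsize_right h_opt; lia.
- move: (le_HH'); rewrite game_leE => /andP [/allP HL_H' /allP H'R_H].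
  rewrite game_leE leftopts_add rightopts_add !all_cat !all_map.
  apply/andP; split; apply/andP; split; apply/allP => g g_opt /=.
  + have gH'_opt : gadd g H' \in leftopts (gadd G H').
      by rewrite leftopts_add mem_cat (map_f (gadd^~ H')).
    apply: contra (game_lf_left gH'_opt) => /game_le_trans; apply.
    by rewrite IH //; have := gsize_left g_opt; lia.
  + by rewrite IH; [exact: HL_H'|have := gsize_left g_opt; lia].
  + have gH_opt : gadd g H \in rightopts (gadd G H).
      by rewrite rightopts_add mem_cat (map_f (gadd^~ H)).
    apply: contra (game_lf_right gH_opt) => le_gH'GH; apply: game_le_trans le_gH'GH.
    by rewrite IH //; have := gsize_right g_opt; lia.
  + by rewrite IH; [exact: H'R_H|have := gsize_right g_opt; lia].
Qed.

Local Open Scope ring_scope.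

Lemma exp2_gt0 e : 0 < 2%:R ^+ e :> rat.
Proof. by rewrite exprn_gt0. Qed.

Lemma exp2_neq0 e : 2%:R ^+ e != 0 :> rat.
Proof. by rewrite gt_eqF ?exp2_gt0. Qed.

Lemma exp2V_gt0 e : 0 < 1 / 2%:R ^+ e :> rat.
Proof. by rewrite div1r invr_gt0 exp2_gt0. Qed.

Lemma intr_exp2 e : (2 ^+ e : int)%:~R = 2%:R ^+ e :> rat.
Proof. by rewrite rmorphXn. Qed.

Lemma ltr_exp2V e f : (e < f)%N -> 1 / 2%:R ^+ f < 1 / 2%:R ^+ e :> rat.
Proof.
move=> lt_ef; rewrite ltr_pdivrMr ?exp2_gt0 // mulrC mulrA mulr1 ltr_pdivlMr ?exp2_gt0 //.
by rewrite mul1r ltr_eXn2l // ltr1n.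
Qed.

Lemma ler_exp2V e f : (e <= f)%N -> 1 / 2%:R ^+ f <= 1 / 2%:R ^+ e :> rat.
Proof. by rewrite leq_eqVlt => /predU1P [->|/ltr_exp2V /ltW]. Qed.

Definition on_grid (e : nat) (x : rat) := exists k : int, x = k%:~R / 2%:R ^+ e.

Lemma dyadicE x : dyadic x <-> exists e, on_grid e x.
Proof. by split=> [[k [e ->]]|[e [k ->]]]; [exists e, k|exists k, e]. Qed.

Lemma on_grid_int e (j : int) : on_grid e j%:~R.
Proof. by exists (j * 2 ^+ e); rewrite intrM intr_exp2 mulfK ?exp2_neq0. Qed.

Lemma on_grid_exp2V e : on_grid e (1 / 2%:R ^+ e).
Proof. by exists 1. Qed.

Lemma on_gridW e f x : (e <= f)%N -> on_grid e x -> on_grid f x.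
Proof.
move=> /subnKC <- [k ->]; exists (k * 2 ^+ (f - e)).
by rewrite intrM intr_exp2 exprD; field; rewrite !exp2_neq0.
Qed.

Lemma on_gridD e x y : on_grid e x -> on_grid e y -> on_grid e (x + y).
Proof. by move=> [j ->] [k ->]; exists (j + k); rewrite intrD mulrDl. Qed.

Lemma on_gridN e x : on_grid e x -> on_grid e (- x).
Proof. by move=> [j ->]; exists (- j); rewrite intrN mulNr. Qed.

Lemma on_gridB e x y : on_grid e x -> on_grid e y -> on_grid e (x - y).
Proof. by move=> gx gy; apply/on_gridD/on_gridN. Qed.

Lemma on_grid_div e f x : on_grid e x -> on_grid (e + f) (x / 2%:R ^+ f).
Proof. by move=> [j ->]; exists j; rewrite exprD invfM mulrA. Qed.

Lemma on_grid_eq e x y : on_grid e x -> on_grid e y ->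
  x - 1 / 2%:R ^+ e < y -> y < x + 1 / 2%:R ^+ e -> x = y.
Proof.
move=> [j ->] [k ->]; rewrite -mulrBl -mulrDl !ltr_pM2r ?invr_gt0 ?exp2_gt0 //.
by rewrite -[1]/(1%:~R : rat) -intrB -intrD !ltr_int => lt_jk lt_kj; have -> : k = j by lia.
Qed.

Lemma on_grid_le e x y : on_grid e x -> on_grid e y -> x < y + 1 / 2%:R ^+ e -> x <= y.
Proof.
move=> [j ->] [k ->]; rewrite -mulrDl ltr_pM2r ?ler_pM2r ?invr_gt0 ?exp2_gt0 //.
by rewrite -[1]/(1%:~R : rat) -intrD ltr_int ler_int; lia.
Qed.

Lemma dyadicD x y : dyadic x -> dyadic y -> dyadic (x + y).
Proof.
move=> /dyadicE [e gx] /dyadicE [f gy]; apply/dyadicE; exists (maxn e f).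
by apply: on_gridD; apply: on_gridW gx || apply: on_gridW gy; rewrite ?leq_maxl ?leq_maxr.
Qed.

Lemma dyadicN x : dyadic x -> dyadic (- x).
Proof. by move=> /dyadicE [e /on_gridN gx]; apply/dyadicE; exists e. Qed.

Lemma dyadicB x y : dyadic x -> dyadic y -> dyadic (x - y).
Proof. by move=> dx dy; apply/dyadicD/dyadicN. Qed.

Lemma dyadic_int (j : int) : dyadic j%:~R.
Proof. by apply/dyadicE; exists 0%N; apply: on_grid_int. Qed.

Lemma dyadic_exp2V e : dyadic (1 / 2%:R ^+ e).
Proof. by apply/dyadicE; exists e; apply: on_grid_exp2V. Qed.

Lemma on_grid_denq e x : on_grid e x -> exists2 f, (f <= e)%N & denq x = 2 ^+ f.
Proof.
move=> [k xE].
have num_den : numq x * 2 ^+ e = k * denq x.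
  by apply/eqP; rewrite -(eqr_int rat) !intrM intr_exp2 numqE; move: (denq x) => d;
    rewrite xE; apply/eqP; field; rewrite exp2_neq0.
have : (`|denq x| %| 2 ^ e)%N.
  rewrite -(@Gauss_dvdr _ `|numq x|) 1?coprime_sym ?coprime_num_den //.
  have -> : (2 ^ e)%N = `|(2 : int) ^+ e|%N by rewrite abszX.
  by rewrite -abszM num_den abszM dvdn_mull.
case/(dvdn_pfactor _ _ (isT : prime 2))=> f le_fe denE; exists f => //.
by rewrite -absz_denq denE -natz natrX.
Qed.

Lemma dyadic_denq x : dyadic x -> exists e, denq x = 2 ^+ e.
Proof. by move=> /dyadicE [e /on_grid_denq [f _ ->]]; exists f. Qed.

Lemma denq_on_grid e x : denq x = 2 ^+ e -> on_grid e x.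
Proof. by move=> den_x; exists (numq x); rewrite -intr_exp2 -den_x divq_num_den. Qed.

Lemma odd_fracq (j : int) e : odd `|j|%N ->
  numq (j%:~R / 2%:R ^+ e.+1) = j /\ denq (j%:~R / 2%:R ^+ e.+1) = 2 ^+ e.+1.
Proof.
move=> odd_j; have coprime_j : coprime `|j| `|(2 ^+ e.+1 : int)|.
  by rewrite abszX coprime_pexpr // coprimen2.
rewrite -intr_exp2 coprimeq_num // coprimeq_den // gtr0_sg ?mul1r ?exprn_gt0 //.
by rewrite gt_eqF ?exprn_gt0 // gtr0_norm ?exprn_gt0.
Qed.

(* The values of the options of [canon x] (see [canonE]): x -/+ 1 / denq x, except that
   an integer has no option on the side of 0. *)
Definition lval (x : rat) : seq rat :=
  if (denq x == 1) && (x <= 0) then [::] else [:: x - (denq x)%:~R^-1].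

Definition rval (x : rat) : seq rat :=
  if (denq x == 1) && (0 <= x) then [::] else [:: x + (denq x)%:~R^-1].

Lemma mem_lval x l : l \in lval x -> l = x - (denq x)%:~R^-1.
Proof. by rewrite /lval; case: ifP => // _; rewrite inE => /eqP. Qed.

Lemma mem_rval x r : r \in rval x -> r = x + (denq x)%:~R^-1.
Proof. by rewrite /rval; case: ifP => // _; rewrite inE => /eqP. Qed.

Lemma lval_lt x l : l \in lval x -> l < x.
Proof. by move/mem_lval ->; rewrite ltrBlDr ltrDl invr_gt0 ltr0z denq_gt0. Qed.

Lemma rval_gt x r : r \in rval x -> x < r.
Proof. by move/mem_rval ->; rewrite ltrDl invr_gt0 ltr0z denq_gt0. Qed.

Lemma lval_int (j : int) : lval j%:~R = if j <= 0 then [::] else [:: j%:~R - 1].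
Proof. by rewrite /lval denq_int lerz0 eqxx invr1. Qed.

Lemma rval_int (j : int) : rval j%:~R = if 0 <= j then [::] else [:: j%:~R + 1].
Proof. by rewrite /rval denq_int ler0z eqxx invr1. Qed.

Lemma lval_frac x : denq x != 1 -> lval x = [:: x - (denq x)%:~R^-1].
Proof. by rewrite /lval => /negbTE ->. Qed.

Lemma rval_frac x : denq x != 1 -> rval x = [:: x + (denq x)%:~R^-1].
Proof. by rewrite /rval => /negbTE ->. Qed.

Lemma lval_dyadic x l : dyadic x -> l \in lval x -> dyadic l.
Proof.
move=> dx /mem_lval ->; have [e ->] := dyadic_denq dx.
by rewrite intr_exp2 -div1r; apply: dyadicB dx (dyadic_exp2V e).
Qed.

Lemma rval_dyadic x r : dyadic x -> r \in rval x -> dyadic r.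
Proof.
move=> dx /mem_rval ->; have [e ->] := dyadic_denq dx.
by rewrite intr_exp2 -div1r; apply: dyadicD dx (dyadic_exp2V e).
Qed.

Lemma options_mid e y : on_grid e y ->
  lval (y + 1 / 2%:R ^+ e.+1) = [:: y] /\ rval (y + 1 / 2%:R ^+ e.+1) = [:: y + 1 / 2%:R ^+ e].
Proof.
move=> [k ->]; set z := _ + _.
have zE : z = (2 * k + 1)%:~R / 2%:R ^+ e.+1.
  by rewrite /z intrD intrM exprS; field; rewrite exp2_neq0.
have [_ den_z] : numq z = 2 * k + 1 /\ denq z = 2 ^+ e.+1.
  by rewrite zE; apply: odd_fracq; lia.
have den_z1 : denq z != 1 by rewrite den_z exprS; lia.
rewrite lval_frac ?rval_frac // den_z intr_exp2 /z exprS.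
by split; congr [:: _]; field; rewrite exp2_neq0.
Qed.

Lemma canon_intE (j : int) : canon j%:~R = canon_int j.
Proof. by rewrite /canon numq_int denq_int. Qed.

Lemma canon0 : canon 0 = Game [::] [::].
Proof. exact: canon_intE 0. Qed.

Lemma canon_natS m : canon m.+1%:R = Game [:: canon m%:R] [::].
Proof. by have := canon_intE m.+1; have := canon_intE m => /= <- <-. Qed.

Lemma half_fracq (j : int) e : ~~ odd `|j|%N ->
  (j %/ 2)%Z%:~R / 2%:R ^+ e = j%:~R / 2%:R ^+ e.+1 :> rat.
Proof.
move=> even_j; have {2}-> : j = (j %/ 2)%Z * 2 by lia.
by rewrite intrM exprS; field; rewrite exp2_neq0.
Qed.

Lemma canon_dyE (j : int) e : canon_dy j e = canon (j%:~R / 2%:R ^+ e).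
Proof.
elim: e j => [|e IH] j; first by rewrite expr0 divr1 canon_intE.
rewrite /=; case: ifP => odd_j; last by rewrite IH half_fracq ?odd_j.
have [num_j den_j] := odd_fracq e odd_j.
by rewrite /canon num_j den_j abszX trunc_expnK //= odd_j.
Qed.

Lemma odd_numq x e : denq x = 2 ^+ e.+1 -> odd `|numq x|%N.
Proof.
move=> den_x; have := coprime_num_den x.
by rewrite den_x abszX coprime_pexpr // -[`|2|%N]/2%N coprimen2.
Qed.

Lemma canonE x : dyadic x -> canon x = Game (map canon (lval x)) (map canon (rval x)).
Proof.
move=> /dyadic_denq [[|e] den_x].
  have -> : x = (numq x)%:~R by rewrite -[x in LHS]divq_num_den den_x expr0 divr1.
  rewrite canon_intE lval_int rval_int; case: (numq x) => [[|k]|k] //=.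
    have -> : k.+1%:~R - 1 = k%:~R :> rat.
      by change (k.+1%:R - 1 = k%:R :> rat); rewrite -natr1 addrK.
    by rewrite canon_intE.
  have -> : (Negz k)%:~R + 1 = (Negz k + 1)%:~R :> rat by rewrite intrD.
  rewrite canon_intE; case: k => [|k] //=.
  by rewrite subn1.
have odd_num := odd_numq den_x.
have xE : x = (numq x)%:~R / 2%:R ^+ e.+1 by rewrite -[x in LHS]divq_num_den den_x intr_exp2.
have den_x1 : denq x != 1 by rewrite den_x exprS; lia.
rewrite lval_frac // rval_frac // {1}/canon den_x abszX trunc_expnK //= odd_num.
rewrite !canon_dyE !half_fracq; try by move: odd_num; lia.
rewrite intr_exp2 [in RHS]xE; move: (numq x) => j.
by congr (Game [:: canon _] [:: canon _]); rewrite ?intrB ?intrD; field; rewrite exp2_neq0.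
Qed.

Lemma canon_mid e y : on_grid e y ->
  canon (y + 1 / 2%:R ^+ e.+1) = Game [:: canon y] [:: canon (y + 1 / 2%:R ^+ e)].
Proof.
move=> gy; have [lval_z rval_z] := options_mid gy.
have dy : dyadic y by apply/dyadicE; exists e.
by rewrite canonE ?lval_z ?rval_z //; apply: dyadicD dy (dyadic_exp2V _).
Qed.

Lemma denq_mid x e : denq x = 2 ^+ e.+1 -> exists2 y, on_grid e y & x = y + 1 / 2%:R ^+ e.+1.
Proof.
move=> den_x; have odd_num := odd_numq den_x.
exists (((numq x - 1) %/ 2)%Z%:~R / 2%:R ^+ e); first by exists ((numq x - 1) %/ 2)%Z.
rewrite half_fracq; last by move: odd_num; lia.
rewrite -[x in LHS]divq_num_den den_x intr_exp2 intrB.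
by field; rewrite exp2_neq0.
Qed.

Lemma dyadic_unit_mid u : dyadic u -> 0 < u -> u < 1 -> exists q w,
  [/\ on_grid q w, 0 <= w, w + 1 / 2%:R ^+ q <= 1 & u = w + 1 / 2%:R ^+ q.+1].
Proof.
move=> du u_gt0 u_lt1; have [[|q] den_u] := dyadic_denq du.
  have [j uE] := denq_on_grid den_u; move: u_gt0 u_lt1; rewrite uE expr0 divr1.
  by rewrite ltr0z ltrz1; lia.
have [w gw uE] := denq_mid den_u; exists q, w; split=> //; move: u_gt0 u_lt1; rewrite uE.
  have := ltr_exp2V (ltnSn q) => lt_qq u_gt0 _.
  by apply: on_grid_le (on_grid_int q 0) gw _; lra.
have := exp2V_gt0 q.+1 => dq_gt0 _ u_lt1.
by apply: on_grid_le (on_gridD gw (on_grid_exp2V q)) (on_grid_int q 1) _; lra.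
Qed.

Lemma lval_int_lt (j k : int) : {in lval j%:~R, forall l, l < k%:~R} -> 0 < j -> j - 1 < k.
Proof.
rewrite lval_int => lt_k /lt_geF j_pos; have := lt_k (j%:~R - 1); rewrite j_pos mem_head.
by rewrite -[1]/(1%:~R : rat) -intrB ltr_int; apply.
Qed.

Lemma rval_int_gt (j k : int) : {in rval j%:~R, forall r, k%:~R < r} -> j < 0 -> k < j + 1.
Proof.
rewrite rval_int => gt_k /lt_geF j_neg; have := gt_k (j%:~R + 1); rewrite j_neg mem_head.
by rewrite -[1]/(1%:~R : rat) -intrD ltr_int; apply.
Qed.

Lemma dyadic_between_eq x y : dyadic x -> dyadic y ->
  {in lval x, forall l, l < y} -> {in rval x, forall r, y < r} ->
  {in lval y, forall l, l < x} -> {in rval y, forall r, x < r} -> x = y.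
Proof.
wlog le_den : x y / denq y <= denq x.
  move=> wlog_xy dx dy lx_y rx_y ly_x ry_x; case: (lerP (denq y) (denq x)) => [|/ltW] le_den.
    exact: wlog_xy.
  by apply/esym; apply: wlog_xy.
move=> dx dy lx_y rx_y ly_x ry_x.
have [e den_x] := dyadic_denq dx; have [f den_y] := dyadic_denq dy.
have le_fe : (f <= e)%N by rewrite -(@ler_eXn2l _ (2 : int)) // -den_x -den_y.
have gx := denq_on_grid den_x; have gy := on_gridW le_fe (denq_on_grid den_y).
case: e den_x le_fe gx gy => [|e] den_x _ gx gy.
  move: gx gy lx_y rx_y ly_x ry_x => [j ->] [k ->]; rewrite expr0 !divr1.
  move=> /lval_int_lt ? /rval_int_gt ? /lval_int_lt ? /rval_int_gt ?.
  by congr intmul; lia.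
have den_x1 : denq x != 1 by rewrite den_x exprS; lia.
(* y lies on the grid of x, and the options of x are one grid step away from x. *)
move: lx_y rx_y; rewrite lval_frac // rval_frac // den_x intr_exp2 -div1r.
by move=> lx_y rx_y; apply: on_grid_eq gx gy (lx_y _ (mem_head _ _)) (rx_y _ (mem_head _ _)).
Qed.

Lemma dyadic_leE x y : dyadic x -> dyadic y ->
  (x <= y) = all (fun l => l < y) (lval x) && all (fun r => x < r) (rval y).
Proof.
move=> dx dy; apply/idP/andP => [le_xy|[/allP lx_y /allP ry_x]].
  by split; apply/allP => z z_opt; [apply: lt_le_trans le_xy|apply: le_lt_trans le_xy _];
    [apply: lval_lt|apply: rval_gt].
rewrite leNgt; apply/negP => lt_yx; move: (lt_yx); rewrite (@dyadic_between_eq x y) ?ltxx //.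
  by move=> r /rval_gt; apply: lt_trans.
by move=> l /lval_lt /lt_trans; apply.
Qed.

Lemma leftopts_canon x : dyadic x -> leftopts (canon x) = map canon (lval x).
Proof. by move=> dx; rewrite {1}(canonE dx). Qed.

Lemma rightopts_canon x : dyadic x -> rightopts (canon x) = map canon (rval x).
Proof. by move=> dx; rewrite {1}(canonE dx). Qed.

Lemma gsize_lval x l : dyadic x -> l \in lval x -> (gsize (canon l) < gsize (canon x))%N.
Proof. by move=> dx l_opt; apply: gsize_left; rewrite leftopts_canon // map_f. Qed.

Lemma gsize_rval x r : dyadic x -> r \in rval x -> (gsize (canon r) < gsize (canon x))%N.
Proof. by move=> dx r_opt; apply: gsize_right; rewrite rightopts_canon // map_f. Qed.

Lemma le_canon x y : dyadic x -> dyadic y -> game_le (canon x) (canon y) = (x <= y).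
Proof.
move: {2}(gsize (canon x) + gsize (canon y)).+1 (ltnSn (gsize (canon x) + gsize (canon y))) => N.
elim: N x y => // N IH x y lt_N dx dy.
rewrite game_leE leftopts_canon // rightopts_canon // !all_map (dyadic_leE dx dy).
congr andb; apply: eq_in_all => z z_opt /=; rewrite IH ?ltNge //.
- by have := gsize_lval dx z_opt; lia.
- exact: lval_dyadic z_opt.
- by have := gsize_rval dy z_opt; lia.
- exact: rval_dyadic z_opt.
Qed.

Lemma lf_canon x y : dyadic x -> dyadic y -> ~~ game_le (canon y) (canon x) = (x < y).
Proof. by move=> dx dy; rewrite le_canon // ltNge. Qed.

Lemma lf_eq_canon X x z : dyadic x -> dyadic z -> game_eq X (canon x) ->
  ~~ game_le (canon z) X = (x < z).
Proof. by move=> dx dz eqX; rewrite (game_le_eqr _ eqX) lf_canon. Qed.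

Lemma gf_eq_canon X x z : dyadic x -> dyadic z -> game_eq X (canon x) ->
  ~~ game_le X (canon z) = (z < x).
Proof. by move=> dx dz eqX; rewrite (game_le_eql _ eqX) lf_canon. Qed.

(* The left option of a non-integer x lies on a coarser grid than x, so its right
   option is a larger step above it. *)
Lemma rval_lval_gt x l r : dyadic x -> l \in lval x -> r \in rval l -> x < r.
Proof.
move=> dx; have [[|e] den_x] := dyadic_denq dx.
  have [j ->] := denq_on_grid den_x; rewrite expr0 divr1 lval_int.
  case: ifPn => // j_pos; rewrite inE => /eqP ->.
  by rewrite -[1]/(1%:~R : rat) -intrB rval_int ifT //; lia.
have [y gy ->] := denq_mid den_x; rewrite (options_mid gy).1 inE => /eqP ->.
move=> /mem_rval ->; have [f le_fe ->] := on_grid_denq gy.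
by rewrite intr_exp2 -(div1r (2%:R ^+ f)) ltrD2l ltr_exp2V.
Qed.

Lemma game_eq_canon (KL KR : seq game) z : dyadic z ->
  {in KL, forall k, ~~ game_le (canon z) k} ->
  {in KR, forall k, ~~ game_le k (canon z)} ->
  {in lval z, forall l, exists2 k, k \in KL & game_le (canon l) k} ->
  {in rval z, forall r, exists2 k, k \in KR & game_le k (canon r)} ->
  game_eq (Game KL KR) (canon z).
Proof.
move=> dz KL_lt KR_gt lval_KL rval_KR; apply/andP; split.
  rewrite game_leE /= rightopts_canon // all_map; apply/andP; split; first exact/allP.
  apply/allP => r r_opt /=; have [k k_opt le_kr] := rval_KR r r_opt.
  by apply: contra (game_lf_right (G := Game KL KR) k_opt); apply: game_le_trans.
rewrite game_leE /= leftopts_canon // all_map; apply/andP; split; last exact/allP.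
apply/allP => l l_opt /=; have [k k_opt le_lk] := lval_KL l l_opt.
by apply: contra (game_lf_left (G := Game KL KR) k_opt) => /game_le_trans; apply.
Qed.

Section Ball.

Variables a b : rat.
Hypotheses (da : dyadic a) (db : dyadic b).

Let B := Game [:: canon a] [:: canon b].

Lemma ball_comparable x : dyadic x -> a < x -> x < b ->
  game_le B (canon x) || game_le (canon x) B.
Proof.
move=> dx lt_ax lt_xb.
have [rval_lf|/allPn [r r_opt /negPn le_rB]] :=
  boolP (all (fun r => ~~ game_le (canon r) B) (rval x)).
  by rewrite game_leE /= rightopts_canon // all_map rval_lf lf_canon // lt_ax.
apply/orP; right; rewrite game_leE /= leftopts_canon // all_map lf_canon // lt_xb !andbT.
apply/allP => l l_opt /=; apply/negP => /(game_le_trans le_rB).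
rewrite le_canon; [|exact: rval_dyadic r_opt|exact: lval_dyadic l_opt].
by rewrite leNgt (lt_trans (lval_lt l_opt) (rval_gt r_opt)).
Qed.

Lemma balanced_ball_eq n : dyadic n -> a < n -> n < b ->
  game_eq (gadd B B) (gadd (canon n) (canon n)) -> game_eq B (canon n).
Proof.
move=> dn lt_an lt_nb /andP [le_BB le_nn].
case/orP: (ball_comparable dn lt_an lt_nb) => le; rewrite /game_eq le ?andbT /=.
  rewrite -(le_add2l (canon n)); apply: game_le_trans le_nn _; by rewrite le_add2r.
rewrite -(le_add2l B); apply: game_le_trans le_BB _; by rewrite le_add2r.
Qed.

Lemma ball_eq_lval_le n : dyadic n -> game_eq B (canon n) -> {in lval n, forall l, l <= a}.
Proof.
move=> dn /andP [le_Bn le_nB] l l_opt; rewrite leNgt; apply/negP => lt_al.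
have dl := lval_dyadic dn l_opt.
move: le_nB; rewrite game_leE leftopts_canon // all_map => /andP [/allP /(_ l l_opt) /= lf_lB _].
move: lf_lB; rewrite game_leE /= lf_canon // lt_al /= rightopts_canon // all_map.
case/allPn=> r r_opt /negPn le_rB; have := game_le_trans le_rB le_Bn.
rewrite le_canon //; last exact: rval_dyadic r_opt.
by rewrite leNgt (rval_lval_gt dn l_opt r_opt).
Qed.

End Ball.

Lemma lval_le_on_grid n p : dyadic n ->
  {in lval n, forall l, l <= n - 1 / 2%:R ^+ p} -> on_grid p n.
Proof.
move=> dn lval_le; have [[|e] den_n] := dyadic_denq dn.
  exact: on_gridW (leq0n p) (denq_on_grid den_n).
have den_n1 : denq n != 1 by rewrite den_n exprS; lia.
move: lval_le; rewrite lval_frac // den_n intr_exp2 -(div1r (2%:R ^+ e.+1)).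
move=> /(_ _ (mem_head _ _)); rewrite lerD2l lerN2 => le_pe.
apply: on_gridW (denq_on_grid den_n); rewrite leqNgt.
by apply: contraL le_pe => /ltr_exp2V; rewrite ltNge.
Qed.

(* The value of <n; -2^-p> : (m + u), for 0 <= u < 1. *)
Definition ordsum_value (n : rat) (p m : nat) (u : rat) : rat :=
  n + 1 / 2%:R ^+ p - 1 / 2%:R ^+ (p + m) + u / 2%:R ^+ (p + m + 1).

Section BallOrdsum.

Variables (n : rat) (p : nat).
Hypothesis n_grid : on_grid p n.

Let B := Game [:: canon (n - 1 / 2%:R ^+ p)] [:: canon (n + 1 / 2%:R ^+ p)].
Hypothesis B_eq : game_eq B (canon n).

Local Notation v := (ordsum_value n p).

Let dn : dyadic n. Proof. by apply/dyadicE; exists p. Qed.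

Lemma ordsum_value_on_grid m q w : on_grid q w -> on_grid (p + m + q + 1) (v m w).
Proof.
move=> gw; have le_p : (p <= p + m + q + 1)%N by rewrite -!addnA leq_addr.
apply: on_gridD; first apply: on_gridB; first apply: on_gridD.
- exact: on_gridW le_p n_grid.
- exact: on_gridW le_p (on_grid_exp2V p).
- by apply: on_gridW (on_grid_exp2V _); rewrite -addnA leq_addr.
- have -> : (p + m + q + 1 = q + (p + m + 1))%N by lia.
  exact: on_grid_div.
Qed.

Lemma ordsum_value_dyadic m u : dyadic u -> dyadic (v m u).
Proof.
by move=> /dyadicE [q gu]; apply/dyadicE; exists (p + m + q + 1)%N; apply: ordsum_value_on_grid.
Qed.

Lemma ordsum_value_ge m u : 0 <= u -> n <= v m u.
Proof.
move=> u_ge0; have := ler_exp2V (leq_addr m p).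
have : 0 <= u / 2%:R ^+ (p + m + 1) by rewrite divr_ge0 // ltW ?exp2_gt0.
by rewrite /ordsum_value; lra.
Qed.

Lemma ordsum_value_lt m u : u < 1 -> v m u < n + 1 / 2%:R ^+ p.
Proof.
move=> u_lt1; have := ltr_exp2V (ltnSn (p + m)).
have : u / 2%:R ^+ (p + m + 1) < 1 / 2%:R ^+ (p + m + 1).
  by rewrite ltr_pM2r // invr_gt0 exp2_gt0.
by rewrite /ordsum_value addn1; lra.
Qed.

Lemma ltr_ordsum_value m u u' : u < u' -> v m u < v m u'.
Proof. by move=> lt_uu'; rewrite /ordsum_value ltrD2l ltr_pM2r // invr_gt0 exp2_gt0. Qed.

Lemma ordsum_value1 m : v m 1 = v m.+1 0.
Proof. by rewrite /ordsum_value addn1 addnS !exprS; field; rewrite !exp2_neq0. Qed.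

Lemma ordsum_value_mid m q w :
  v m (w + 1 / 2%:R ^+ q.+1) = v m w + 1 / 2%:R ^+ (p + m + q + 1).+1 /\
  v m (w + 1 / 2%:R ^+ q) = v m w + 1 / 2%:R ^+ (p + m + q + 1).
Proof. by rewrite /ordsum_value !addn1 !exprS !exprD; split; field; rewrite !exp2_neq0. Qed.

Lemma ordsum_value_succ m :
  v m.+1 0 = v m 0 + 1 / 2%:R ^+ (p + m).+1 /\ v m 0 + 1 / 2%:R ^+ (p + m) = n + 1 / 2%:R ^+ p.
Proof. by rewrite /ordsum_value !addn1 !addnS !exprS; split; field; rewrite !exp2_neq0. Qed.

Lemma ordsum_ball_canon_succ m : game_eq (ordsum B (canon m%:R)) (canon (v m 0)) ->
  game_eq (ordsum B (canon m.+1%:R)) (canon (v m.+1 0)).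
Proof.
move=> IH; have [vS vb] := ordsum_value_succ m.
have g0 : on_grid (p + m) (v m 0).
  rewrite /ordsum_value mul0r addr0; apply: on_gridB (on_grid_exp2V _).
  by apply: on_gridD; apply: on_gridW (leq_addr m p) _; [exact: n_grid|exact: on_grid_exp2V].
have [lval_z rval_z] := options_mid g0; rewrite -vS vb in lval_z rval_z.
have d0 := ordsum_value_dyadic m (dyadic_int 0).
have dz := ordsum_value_dyadic m.+1 (dyadic_int 0).
have d_gt0 := exp2V_gt0 p.
have lt_az : n - 1 / 2%:R ^+ p < v m.+1 0 by have := ordsum_value_ge m.+1 (lexx 0); lra.
have lt_zb := ordsum_value_lt m.+1 ltr01.
have lt_vz : v m 0 < v m.+1 0 by rewrite vS ltrDl exp2V_gt0.
rewrite canon_natS /=; apply: game_eq_canon => //.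
- move=> k; rewrite !inE => /orP [/eqP ->|/eqP ->]; last by rewrite (lf_eq_canon _ _ IH).
  by rewrite lf_canon //; apply: dyadicB dn (dyadic_exp2V p).
- by move=> k; rewrite inE => /eqP ->; rewrite lf_canon //; apply: dyadicD dn (dyadic_exp2V p).
- move=> l; rewrite lval_z inE => /eqP ->; exists (ordsum B (canon m%:R)).
    by rewrite !inE eqxx orbT.
  exact: game_eq_ge IH.
- move=> r; rewrite rval_z inE => /eqP ->; exists (canon (n + 1 / 2%:R ^+ p)).
    by rewrite inE.
  exact: game_le_refl.
Qed.

Lemma ordsum_ball_canon_mid m q w : on_grid q w -> 0 <= w -> w + 1 / 2%:R ^+ q <= 1 ->
  game_eq (ordsum B (canon (m%:R + w))) (canon (v m w)) ->
  game_eq (ordsum B (canon (m%:R + (w + 1 / 2%:R ^+ q)))) (canon (v m (w + 1 / 2%:R ^+ q))) ->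
  game_eq (ordsum B (canon (m%:R + (w + 1 / 2%:R ^+ q.+1)))) (canon (v m (w + 1 / 2%:R ^+ q.+1))).
Proof.
move=> gw w_ge0 le_w1 IHL IHR.
have gmw : on_grid q (m%:R + w) by apply: on_gridD gw; apply: (on_grid_int q m).
have [vL vR] := ordsum_value_mid m q w.
have [lval_z rval_z] := options_mid (ordsum_value_on_grid m gw); rewrite -vL -vR in lval_z rval_z.
have dw : dyadic w by apply/dyadicE; exists q.
have dL := ordsum_value_dyadic m dw.
have dR := ordsum_value_dyadic m (dyadicD dw (dyadic_exp2V q)).
have dz := ordsum_value_dyadic m (dyadicD dw (dyadic_exp2V q.+1)).
have lt_qq := ltr_exp2V (ltnSn q).
have d_gt0 := exp2V_gt0 p.
have dq_gt0 := exp2V_gt0 q.+1.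
have u_ge0 : 0 <= w + 1 / 2%:R ^+ q.+1 by lra.
have lt_az : n - 1 / 2%:R ^+ p < v m (w + 1 / 2%:R ^+ q.+1) by have := ordsum_value_ge m u_ge0; lra.
have lt_zb : v m (w + 1 / 2%:R ^+ q.+1) < n + 1 / 2%:R ^+ p by apply: ordsum_value_lt; lra.
have lt_Lz : v m w < v m (w + 1 / 2%:R ^+ q.+1) by apply: ltr_ordsum_value; lra.
have lt_zR : v m (w + 1 / 2%:R ^+ q.+1) < v m (w + 1 / 2%:R ^+ q) by apply: ltr_ordsum_value; lra.
rewrite addrA canon_mid //= -addrA; apply: game_eq_canon => //.
- move=> k; rewrite !inE => /orP [/eqP ->|/eqP ->]; last by rewrite (lf_eq_canon _ _ IHL).
  by rewrite lf_canon //; apply: dyadicB dn (dyadic_exp2V p).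
- move=> k; rewrite !inE => /orP [/eqP ->|/eqP ->]; last by rewrite (gf_eq_canon _ _ IHR).
  by rewrite lf_canon //; apply: dyadicD dn (dyadic_exp2V p).
- move=> l; rewrite lval_z inE => /eqP ->; exists (ordsum B (canon (m%:R + w))).
    by rewrite !inE eqxx orbT.
  exact: game_eq_ge IHL.
- move=> r; rewrite rval_z inE => /eqP ->; exists (ordsum B (canon (m%:R + (w + 1 / 2%:R ^+ q)))).
    by rewrite !inE eqxx orbT.
  exact: game_eq_le IHR.
Qed.

Lemma ordsum_ball_canon m u : dyadic u -> 0 <= u -> u < 1 ->
  game_eq (ordsum B (canon (m%:R + u))) (canon (v m u)).
Proof.
move: {2}(gsize (canon (m%:R + u))).+1 (ltnSn (gsize (canon (m%:R + u)))) => N.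
elim: N m u => // N IH m u lt_N du u_ge0 u_lt1.
have [u0|u_neq0] := eqVneq u 0.
  move: lt_N; rewrite u0 addr0; case: m => [|m] lt_N.
    by rewrite canon0 ordsum0 /ordsum_value addn0 mul0r !addr0 addrK.
  apply: ordsum_ball_canon_succ; rewrite -[m%:R]addr0.
  apply: (IH m 0 _ (dyadic_int 0) (lexx 0) ltr01).
  move: lt_N; rewrite canon_natS addr0 ltnS; apply: leq_trans.
  by apply: gsize_left; rewrite inE.
have u_gt0 : 0 < u by rewrite lt_neqAle eq_sym u_neq0.
have [q [w [gw w_ge0 le_w1 uE]]] := dyadic_unit_mid du u_gt0 u_lt1; subst u.
have dw : dyadic w by apply/dyadicE; exists q.
have dq_gt0 := exp2V_gt0 q; have dq1_gt0 := exp2V_gt0 q.+1.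
have gmw : on_grid q (m%:R + w) by apply: on_gridD gw; apply: (on_grid_int q m).
rewrite -!addrA in (canon_mu := canon_mid gmw); rewrite canon_mu ltnS in lt_N.
apply: ordsum_ball_canon_mid => //.
  apply: IH => //; last by lra.
  by apply: leq_trans lt_N; apply: gsize_left; rewrite inE.
have [lt_w1|ge_w1] := ltrP (w + 1 / 2%:R ^+ q) 1.
  apply: IH => //; [|exact: dyadicD dw (dyadic_exp2V q)|lra].
  by apply: leq_trans lt_N; apply: gsize_right; rewrite inE.
have w1 : w + 1 / 2%:R ^+ q = 1 by apply/eqP; rewrite eq_le le_w1.
rewrite w1 in lt_N *; rewrite ordsum_value1 natr1 -[m.+1%:R]addr0.
apply: (IH m.+1 0 _ (dyadic_int 0) (lexx 0) ltr01); rewrite addr0 -natr1.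
by apply: leq_trans lt_N; apply: gsize_right; rewrite inE.
Qed.

End BallOrdsum.

Theorem theorem4p5 (n : rat) (p : nat) :
  dyadic n ->
  balanced n (- (1 / 2%:R ^+ p)) ->
  forall (m q a : nat),
    ((odd a && (0 < a)%N && (a < 2 ^ q)%N) || (a == 0%N)) ->
    (0 : rat) < m%:R + a%:R / 2%:R ^+ q ->
    forall H : game,
      game_eq H (canon (m%:R + a%:R / 2%:R ^+ q)) ->
      game_eq (ordsum (ball n (- (1 / 2%:R ^+ p))) H)
              (canon (n + 1 / 2%:R ^+ p - 1 / 2%:R ^+ (p + m)
                        + a%:R / 2%:R ^+ (p + m + q + 1))).
Proof.
move=> dn bal m q a a_cond _ H eqH.
have ballE : ball n (- (1 / 2%:R ^+ p)) =
    Game [:: canon (n - 1 / 2%:R ^+ p)] [:: canon (n + 1 / 2%:R ^+ p)].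
  by rewrite /ball opprK.
rewrite /balanced ballE in bal; rewrite ballE.
have d_gt0 := exp2V_gt0 p.
have da := dyadicB dn (dyadic_exp2V p); have db := dyadicD dn (dyadic_exp2V p).
have lt_an : n - 1 / 2%:R ^+ p < n by lra.
have lt_nb : n < n + 1 / 2%:R ^+ p by lra.
have B_eq := balanced_ball_eq da db dn lt_an lt_nb bal.
have n_grid := lval_le_on_grid dn (ball_eq_lval_le da dn B_eq).
have du : dyadic (a%:R / 2%:R ^+ q) by exists a, q.
have u_ge0 : 0 <= a%:R / 2%:R ^+ q :> rat by rewrite divr_ge0 // ltW ?exp2_gt0.
have u_lt1 : a%:R / 2%:R ^+ q < 1 :> rat.
  rewrite ltr_pdivrMr ?exp2_gt0 // mul1r -natrX ltr_nat.
  by case/orP: a_cond => [/andP [_ ->] //|/eqP ->]; rewrite expn_gt0.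
apply: game_eq_trans (eq_ordsum2l _ eqH) _.
have -> : n + 1 / 2%:R ^+ p - 1 / 2%:R ^+ (p + m) + a%:R / 2%:R ^+ (p + m + q + 1) =
    ordsum_value n p m (a%:R / 2%:R ^+ q).
  by rewrite /ordsum_value !exprD; field; rewrite !exp2_neq0.
exact: ordsum_ball_canon.
Qed.
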